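(* Let $P$ be the program NQUEENS. Then $S^0\subseteq\mathcal{M}_P$; that is, NQUEENS is complete with respect to $S^0$. Consequently NQUEENS is also complete with respect to $S^0_{pqs}$ (i.e. $S^0_{pqs}\subseteq\mathcal{M}_P$).
   Context: Terms are built over a fixed alphabet containing the constant $0$, the unary symbol $s$, the list constant $[\,]$ and the binary list constructor $[\cdot|\cdot]$; $\mathcal{HU}$ is the set of ground terms and $\mathcal{HB}$ the set of ground atoms. A natural number $i$ is identified with the term $s^i(0)$. Prolog list notation is used: $[e_1,\dots,e_n|e]$ stands for $e$ when $n=0$, and a list of length $n$ is a term $[e_1,\dots,e_n]$. A term $e$ is the $k$-th member of a term $t$ ($k\ge 1$) if $t=[e_1,\dots,e_{k-1},e|e']$ for some terms $e_1,\dots,e_{k-1},e'$; $e$ is a member of $t$ if it is its $k$-th member for some $k$. A list of distinct members is a list whose elements are pairwise distinct. The program NQUEENS consists of the definite clauses (capitalized names are variables): (C1) $pqs(0,X_1,X_2,X_3)$. (C2) $pqs(s(I),Cs,Us,[X|Ds]) \gets pqs(I,Cs,[Y|Us],Ds),\ pq(s(I),Cs,Us,Ds)$. (C3) $pq(I,[I|X_1],[I|X_2],[I|X_3])$. (C4) $pq(I,[X_1|Cs],[X_2|Us],[X_3|Ds]) \gets pq(I,Cs,Us,Ds)$. $\mathcal{M}_P$ denotes the least Herbrand model of a program $P$. If a number $j$ is the $k$-th member of a list $cs$, the up-diagonal number of $j$ w.r.t. $i$ in $cs$ is $k+j-i$ and the down-diagonal number is $k+i-j$. A triple $(cs,us,ds)$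 of terms is correct up to $m$ w.r.t. $i$ when $0\le m\le i$ and: $cs$ is a list of distinct members and each $j\in\{1,\dots,m\}$ is a member of $cs$; the up-diagonal numbers of $1,\dots,m$ in $cs$ are pairwise distinct, and likewise the down-diagonal numbers; and for each $j\in\{1,\dots,m\}$, if the up-diagonal (resp. down-diagonal) number of $j$ w.r.t. $i$ in $cs$ is $l>0$, then the $l$-th member of $us$ (resp. $ds$) is $j$. Specifications: $S_{pq}=\{pq(i,[c_1,\dots,c_k,i|c],[u_1,\dots,u_k,i|u],[d_1,\dots,d_k,i|d])\in\mathcal{HB}\mid k\ge0\}$; $S^0_{pqs}=\{pqs(i,cs,us,[t|ds])\in\mathcal{HB}\mid i>0$ a natural number and $(cs,us,ds)$ is correct up to $i$ w.r.t. $i\}$; $S^0=S_{pq}\cup S^0_{pqs}\cup\{pqs(0,cs,us,ds)\mid cs,us,ds\in\mathcal{HU}\}$. *)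

From Stdlib Require Import List ZArith Lia.
Import ListNotations.

Inductive term : Type :=
| T0 : term
| Ts : term -> term
| Tnil : term
| Tcons : term -> term -> term.

Inductive atom : Type :=
| Apqs : term -> term -> term -> term -> atom
| Apq  : term -> term -> term -> term -> atom.

Fixpoint num (i : nat) : term :=
  match i with O => T0 | S n => Ts (num n) end.

(* Prolog list notation [e1,...,en|e] *)
Fixpoint lst (l : list term) (e : term) : term :=
  match l with [] => e | x :: r => Tcons x (lst r e) end.

(* A Herbrand interpretation is a set of ground atoms.  It is a model of
   NQUEENS iff it is closed under every ground instance of (C1)-(C4). *)
Definition herbrand_model_NQUEENS (I : atom -> Prop) : Prop :=
  (forall x1 x2 x3, I (Apqs T0 x1 x2 x3)) /\
  (forall i cs us x ds y,
              I (Apqs i cs (Tcons y us) ds) -> I (Apq (Ts i) cs us ds) ->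
              I (Apqs (Ts i) cs us (Tcons x ds))) /\
  (forall i x1 x2 x3, I (Apq i (Tcons i x1) (Tcons i x2) (Tcons i x3))) /\
  (forall i x1 cs x2 us x3 ds,
              I (Apq i cs us ds) ->
              I (Apq i (Tcons x1 cs) (Tcons x2 us) (Tcons x3 ds))).

Definition M_NQUEENS (a : atom) : Prop :=
  forall I, herbrand_model_NQUEENS I -> I a.

Definition kth_member (t : term) (k : nat) (e : term) : Prop :=
  1 <= k /\ exists (l : list term) (e' : term),
    length l = k - 1 /\ t = lst l (Tcons e e').

Definition member (e t : term) : Prop := exists k, kth_member t k e.

Definition distinct_list (t : term) : Prop :=
  exists l : list term, t = lst l Tnil /\ NoDup l.

Definition updiag (k j i : nat) : Z := (Z.of_nat k + Z.of_nat j - Z.of_nat i)%Z.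
Definition downdiag (k j i : nat) : Z := (Z.of_nat k + Z.of_nat i - Z.of_nat j)%Z.

Definition correct_up_to (cs us ds : term) (m i : nat) : Prop :=
  m <= i /\
  distinct_list cs /\
  (forall j, 1 <= j <= m -> member (num j) cs) /\
  (forall j1 j2 k1 k2, 1 <= j1 <= m -> 1 <= j2 <= m -> j1 <> j2 ->
     kth_member cs k1 (num j1) -> kth_member cs k2 (num j2) ->
     updiag k1 j1 i <> updiag k2 j2 i) /\
  (forall j1 j2 k1 k2, 1 <= j1 <= m -> 1 <= j2 <= m -> j1 <> j2 ->
     kth_member cs k1 (num j1) -> kth_member cs k2 (num j2) ->
     downdiag k1 j1 i <> downdiag k2 j2 i) /\
  (forall j k (l : nat), 1 <= j <= m -> kth_member cs k (num j) ->
     Z.of_nat l = updiag k j i -> 0 < l -> kth_member us l (num j)) /\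
  (forall j k (l : nat), 1 <= j <= m -> kth_member cs k (num j) ->
     Z.of_nat l = downdiag k j i -> 0 < l -> kth_member ds l (num j)).

Definition S_pq (a : atom) : Prop :=
  exists i (cl ul dl : list term) c u d,
    length cl = length ul /\ length ul = length dl /\
    a = Apq i (lst cl (Tcons i c)) (lst ul (Tcons i u)) (lst dl (Tcons i d)).

Definition S0_pqs (a : atom) : Prop :=
  exists (i : nat) cs us t ds,
    0 < i /\ correct_up_to cs us ds i i /\ a = Apqs (num i) cs us (Tcons t ds).

Definition S0 (a : atom) : Prop :=
  S_pq a \/ S0_pqs a \/ (exists cs us ds, a = Apqs T0 cs us ds).

From Stdlib Require Import List ZArith Lia Classical.
Import ListNotations.

(* The least Herbrand model M_P is itself a model of NQUEENS (it is an
   intersection of models), so it suffices to show that every atom of S^0 is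
   derivable by the closure rules (C1)-(C4) of M_P.
   - S_pq: induction on the common length of the three prefixes, using (C3)
     for the base case and (C4) for the step.
   - S^0_pqs: induction on i.  If (cs,us,ds) is correct up to i+1 w.r.t. i+1,
     then (a) the queen i+1 sits at some position k of cs, and is the k-th
     member of us and ds too, so pq(i+1,cs,us,ds) is in S_pq; (b) ds is a
     non-empty list [t'|ds'] (it holds queen 1) and, for a suitable head y
     (the queen on up-diagonal 0, if any), (cs,[y|us],ds') is correct up to i
     w.r.t. i: relative to row i, up-diagonals grow by one and down-diagonals
     shrink by one.  Then (C2) concludes; the base case i = 0 is (C1). *)

Lemma kth_member_cons y t l e :
  kth_member t l e -> kth_member (Tcons y t) (S l) e.
Proof.
  intros [Hl [L [e' [HL Ht]]]]. split; [lia|].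
  exists (y :: L), e'. split; [simpl; lia | simpl; now rewrite Ht].
Qed.

Lemma kth_member_uncons y t l e :
  1 <= l -> kth_member (Tcons y t) (S l) e -> kth_member t l e.
Proof.
  intros Hl [_ [L [e' [HL Ht]]]].
  destruct L as [|a L]; simpl in HL; [lia|].
  simpl in Ht. injection Ht as _ Ht.
  split; [exact Hl|]. exists L, e'. split; [lia | exact Ht].
Qed.

Lemma kth_member_head y t : kth_member (Tcons y t) 1 y.
Proof. split; [lia|]. now exists [], t. Qed.

Lemma kth_member_is_cons t k e :
  kth_member t k e -> exists a b, t = Tcons a b.
Proof. intros [_ [L [e' [_ Ht]]]]. destruct L; simpl in Ht; eauto. Qed.

Lemma least_model_is_model : herbrand_model_NQUEENS M_NQUEENS.
Proof.
  repeat split.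
  - intros x1 x2 x3 I HI. apply (proj1 HI).
  - intros i cs us x ds y Hpqs Hpq I HI.
    apply (proj1 (proj2 HI)) with (y := y); [apply Hpqs | apply Hpq]; exact HI.
  - intros i x1 x2 x3 I HI. apply (proj1 (proj2 (proj2 HI))).
  - intros i x1 cs x2 us x3 ds Hpq I HI.
    apply (proj2 (proj2 (proj2 HI))). apply Hpq, HI.
Qed.

Lemma pq_complete (I : atom -> Prop) : herbrand_model_NQUEENS I ->
  forall a, S_pq a -> I a.
Proof.
  intros (_ & _ & C3 & C4) a (i & cl & ul & dl & c & u & d & Hcu & Hud & ->).
  revert ul dl Hcu Hud.
  induction cl as [|x cl IH]; intros [|xu ul] [|xd dl] Hcu Hud;
    simpl in *; try discriminate.
  - apply C3.
  - apply C4, IH; lia.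
Qed.

(* The queen of the last row i of a correct placement sits at some position k
   of cs and is the k-th member of us and ds as well: a pq atom of S_pq. *)
Lemma correct_last_queen cs us ds i :
  1 <= i -> correct_up_to cs us ds i i -> S_pq (Apq (num i) cs us ds).
Proof.
  intros Hi (_ & _ & Hmem & _ & _ & Hus & Hds).
  destruct (Hmem i) as [k Hk]; [lia|].
  assert (Hk1 : 1 <= k) by apply Hk.
  assert (Hku := Hus i k k ltac:(lia) Hk ltac:(unfold updiag; lia) ltac:(lia)).
  assert (Hkd := Hds i k k ltac:(lia) Hk ltac:(unfold downdiag; lia) ltac:(lia)).
  destruct Hk as [_ [cl [c [Hcl ->]]]].
  destruct Hku as [_ [ul [u [Hul ->]]]].
  destruct Hkd as [_ [dl [d [Hdl ->]]]].
  exists (num i), cl, ul, dl, c, u, d. repeat split; lia.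
Qed.

(* Queen 1 has a positive down-diagonal number, so ds is a non-empty list. *)
Lemma correct_downs_nonempty cs us ds m i :
  1 <= m -> correct_up_to cs us ds m i -> exists t ds', ds = Tcons t ds'.
Proof.
  intros Hm (Hmi & _ & Hmem & _ & _ & _ & Hds).
  destruct (Hmem 1) as [k Hk]; [lia|].
  assert (Hk1 : 1 <= k) by apply Hk.
  apply kth_member_is_cons with (k := k + i - 1) (e := num 1).
  apply (Hds 1 k); [lia | exact Hk | unfold downdiag; lia | lia].
Qed.

(* Distinct up-diagonals: at most one queen lies on up-diagonal 0, so some
   term y is the only possible such queen. *)
Lemma updiag_zero_queen cs us ds m i :
  correct_up_to cs us ds m i ->
  exists y, forall j k, 1 <= j <= m -> kth_member cs k (num j) ->
    updiag k j i = 0%Z -> num j = y.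
Proof.
  intros (_ & _ & _ & Hup & _).
  destruct (classic (exists j k, 1 <= j <= m /\ kth_member cs k (num j) /\
                                 updiag k j i = 0%Z))
    as [(j0 & k0 & Hj0 & Hk0 & Hu0) | Hnone].
  - exists (num j0). intros j k Hj Hk Hu.
    destruct (Nat.eq_dec j j0) as [->|Hne]; [reflexivity|].
    exfalso. apply (Hup j j0 k k0); auto; congruence.
  - exists T0. intros j k Hj Hk Hu. exfalso. apply Hnone; eauto.
Qed.

Lemma correct_shift cs us t ds i :
  correct_up_to cs us (Tcons t ds) (S i) (S i) ->
  exists y, correct_up_to cs (Tcons y us) ds i i.
Proof.
  intros Hc.
  destruct (updiag_zero_queen _ _ _ _ _ Hc) as [y Hy].
  destruct Hc as (_ & Hd & Hmem & Hup & Hdn & Hus & Hds).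
  exists y. split; [lia|]. split; [exact Hd|].
  split; [intros; apply Hmem; lia|]. split; [|split; [|split]].
  - intros j1 j2 k1 k2 ? ? ? ? ?.
    specialize (Hup j1 j2 k1 k2 ltac:(lia) ltac:(lia) ltac:(auto) ltac:(auto) ltac:(auto)).
    unfold updiag in *; lia.
  - intros j1 j2 k1 k2 ? ? ? ? ?.
    specialize (Hdn j1 j2 k1 k2 ltac:(lia) ltac:(lia) ltac:(auto) ltac:(auto) ltac:(auto)).
    unfold downdiag in *; lia.
  - intros j k [|[|l]] Hj Hk Hl Hl0; [lia | |].
    + rewrite (Hy j k) by (auto; unfold updiag in *; lia). apply kth_member_head.
    + apply kth_member_cons, (Hus j k); [lia | exact Hk | unfold updiag in *; lia | lia].
  - intros j k l Hj Hk Hl Hl0.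
    apply kth_member_uncons with (y := t); [lia|].
    apply (Hds j k); [lia | exact Hk | unfold downdiag in *; lia | lia].
Qed.

Lemma pqs_complete i : forall cs us t ds,
  correct_up_to cs us ds i i -> M_NQUEENS (Apqs (num i) cs us (Tcons t ds)).
Proof.
  destruct least_model_is_model as (C1 & C2 & _).
  induction i as [|i IH]; intros cs us t ds Hc; [apply C1|].
  assert (Hpq : M_NQUEENS (Apq (num (S i)) cs us ds)).
  { apply pq_complete; [exact least_model_is_model|].
    apply correct_last_queen; [lia | exact Hc]. }
  destruct i as [|i]; [apply C2 with (y := T0); [apply C1 | exact Hpq]|].
  destruct (correct_downs_nonempty cs us ds (S (S i)) (S (S i)))
    as (t' & ds' & ->); [lia | exact Hc|].
  destruct (correct_shift cs us t' ds' (S i) Hc) as [y Hy].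
  apply C2 with (y := y); [apply IH, Hy | exact Hpq].
Qed.

Theorem mainTheorem5 :
  (forall a : atom, S0 a -> M_NQUEENS a) /\
  (forall a : atom, S0_pqs a -> M_NQUEENS a).
Proof.
  assert (Hpqs : forall a, S0_pqs a -> M_NQUEENS a).
  { intros a (i & cs & us & t & ds & _ & Hc & ->). now apply pqs_complete. }
  split; [|exact Hpqs].
  intros a [Hpq | [Hq | (cs & us & ds & ->)]].
  - exact (pq_complete _ least_model_is_model a Hpq).
  - exact (Hpqs a Hq).
  - apply (proj1 least_model_is_model).
Qed.
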